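(* Let $\{\alpha_{i,j,k}\}_{1\le i,j,k\le d}$ be real numbers such that $\alpha_{\pi(i),\pi(j),\pi(k)}=\alpha_{i,j,k}$ for every $(i,j,k)$ and every permutation $\pi$ of $(i,j,k)$. Suppose the system $$\frac{\partial\varphi}{\partial t_i}=\sum_{j,k}\alpha_{i,j,k}t_j\frac{\partial\varphi}{\partial t_k}+t_i\varphi,\qquad i=1,\dots,d,$$ has a solution $\varphi$ of class $C^2$ on a neighborhood $V$ of $\mathbf 0\in\mathbb R^d$ with $\varphi(\mathbf 0)\ne0$. For $k=1,\dots,d$ let $A_k:=(\alpha_{k,r,s})_{1\le r,s\le d}$ and for $i,j$ let $C_{i,j}:=[A_i,A_j]=A_iA_j-A_jA_i$. Then for all $(i,j)\in\{1,\dots,d\}^2$ and all $\mathbf t=(t_1,\dots,t_d)$ in a neighborhood of $\mathbf 0$, $$\big(C_{i,j}\mathbf t\big)\cdot\Big(\big(I-t_1A_1-\cdots-t_dA_d\big)^{-1}\mathbf t\Big)=0,$$ where $I$ is the $d\times d$ identity matrix and $\cdot$ is the standard inner product on $\mathbb R^d$. *)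

From HB Require Import structures.
From mathcomp Require Import all_boot all_order all_algebra.
From mathcomp Require Import all_classical all_reals all_analysis.
Set Implicit Arguments. Unset Strict Implicit. Unset Printing Implicit Defensive.
Import Order.TTheory GRing.Theory Num.Theory.
Import numFieldNormedType.Exports.
Local Open Scope ring_scope.
Local Open Scope classical_set_scope.

(* Points of R^d are column vectors 'cV[R]_d; coordinate t_i is t i 0. *)

Definition basis_vec {R : realType} {d : nat} (i : 'I_d) : 'cV[R]_d := delta_mx i 0.

Definition partial {R : realType} {d : nat} (i : 'I_d) (f : 'cV[R]_d -> R)
  (x : 'cV[R]_d) : R := 'D_(basis_vec i) f x.

Definition C2_on {R : realType} {d : nat} (V : set 'cV[R]_d) (f : 'cV[R]_d -> R) : Prop :=
  forall x, V x ->
    {for x, continuous f} /\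
    forall i : 'I_d,
      derivable f x (basis_vec i) /\ {for x, continuous (partial i f)} /\
      forall j : 'I_d,
        derivable (partial i f) x (basis_vec j) /\
        {for x, continuous (partial j (partial i f))}.

Definition dotv {R : realType} {d : nat} (u v : 'cV[R]_d) : R :=
  \sum_(r < d) u r 0 * v r 0.

Definition Amat {R : realType} {d : nat} (alpha : 'I_d -> 'I_d -> 'I_d -> R)
  (k : 'I_d) : 'M[R]_d := \matrix_(r < d, s < d) alpha k r s.

Definition Cmat {R : realType} {d : nat} (alpha : 'I_d -> 'I_d -> 'I_d -> R)
  (i j : 'I_d) : 'M[R]_d := Amat alpha i *m Amat alpha j - Amat alpha j *m Amat alpha i.

From HB Require Import structures.
From mathcomp Require Import all_boot all_order all_algebra.
From mathcomp Require Import all_classical all_reals all_analysis.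
From mathcomp Require Import perm lra ring.
Set Implicit Arguments. Unset Strict Implicit. Unset Printing Implicit Defensive.
Import Order.TTheory GRing.Theory Num.Theory.
Import numFieldNormedType.Exports.
Local Open Scope ring_scope.
Local Open Scope classical_set_scope.

(* Write M t := \sum_k t_k A_k, g := grad phi t and p := phi t.  The system
   reads (1 - M t) g = p t; differentiating it once more gives
   (1 - M t) H = S + t g^T for the Hessian H, with S := M g + p 1.  As M t, S
   (the alphas being totally symmetric) and H (by Schwarz's theorem) are
   symmetric, computing (1 - M t) H (1 - M t) in two ways shows that S commutes
   with M t.  Near 0, 1 - M t is invertible and g = p u with
   u := (1 - M t)^-1 t, so M u commutes with M t; by total symmetry again, the
   (i, j) entry of [M u, M t] is (C_ij t) . u. *)

Section Schwarz.
Context {R : realType} {V : normedModType R}.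
Implicit Types (f : V -> R) (x a b : V).

Lemma is_derive_line f a y s :
  derivable f (s *: a + y) a ->
  is_derive s 1 (fun r : R => f (r *: a + y)) ('D_a f (s *: a + y)).
Proof.
move=> df.
have E : (fun h : R => h^-1 *: (((fun r : R => f (r *: a + y)) \o shift s) (h *: 1)
           - f (s *: a + y)))
  = (fun h : R => h^-1 *: ((f \o shift (s *: a + y)) (h *: a) - f (s *: a + y))).
  by apply: funext => h /=; rewrite [h *: 1]mulr1 scalerDl addrA.
by split; rewrite ?/derivable ?/derive E.
Qed.

Lemma MVT_segment (g dg : R -> R) (h : R) : 0 < h ->
  (forall s, 0 <= s <= h -> is_derive s 1 g (dg s)) ->
  exists2 c, 0 <= c <= h & g h - g 0 = dg c * h.
Proof.
move=> h0 dg_g.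
have [||c] := @MVT _ g dg _ _ h0.
- by move=> x; rewrite in_itv /= => /andP[x0 xh]; apply: dg_g; rewrite !ltW.
- apply: derivable_within_continuous => x; rewrite in_itv /= => x_in.
  by case: (dg_g x x_in).
- by rewrite in_itv /= subr0 => /andP[c0 ch] E; exists c; rewrite ?ltW.
Qed.

Lemma second_difference_mvt f x a b (h : R) : 0 < h ->
  (forall s r : R, 0 <= s <= h -> 0 <= r <= h ->
     derivable f (s *: a + (r *: b + x)) a /\
     derivable ('D_a f) (s *: a + (r *: b + x)) b) ->
  exists c c', [/\ 0 <= c <= h, 0 <= c' <= h &
    f (h *: a + (h *: b + x)) - f (h *: a + x) - (f (h *: b + x) - f x)
    = 'D_b ('D_a f) (c *: a + (c' *: b + x)) * h ^+ 2].
Proof.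
move=> h0 D.
have hh : 0 <= h <= h by rewrite (ltW h0) /=.
have zh : (0 : R) <= 0 <= h by rewrite lexx ltW.
(* The [0 *: b] keeps the points in the shape required by [D] (with [r = 0]). *)
pose dg s := 'D_a f (s *: a + (h *: b + x)) - 'D_a f (s *: a + (0 *: b + x)).
have [c c_h Ec] : exists2 c, 0 <= c <= h &
    (f (h *: a + (h *: b + x)) - f (h *: a + (0 *: b + x)))
    - (f (0 *: a + (h *: b + x)) - f (0 *: a + (0 *: b + x))) = dg c * h.
  apply: (MVT_segment (g := fun s => f (s *: a + (h *: b + x))
                                   - f (s *: a + (0 *: b + x)))) => // s s_h.
  apply: is_deriveB; apply/is_derive_line.
    exact: (D s h s_h hh).1.
  exact: (D s 0 s_h zh).1.
have Dc r : 0 <= r <= h -> derivable ('D_a f) (r *: b + (c *: a + x)) b.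
  by move=> r_h; rewrite addrCA; exact: (D c r c_h r_h).2.
have [c' c'_h Ec'] := MVT_segment h0 (fun r r_h => is_derive_line (Dc r r_h)).
exists c, c'; split => //.
rewrite !scale0r !add0r in Ec Ec'.
rewrite Ec /dg scale0r add0r (addrCA (c *: a)) Ec'.
by rewrite (addrCA (c' *: b)) -mulrA -expr2.
Qed.

Lemma box_nbhs x a b (W : set V) : nbhs x W ->
  exists2 h : R, 0 < h &
    forall s r, 0 <= s <= h -> 0 <= r <= h -> W (s *: a + (r *: b + x)).
Proof.
move=> /nbhs_normP[e /= e0 xeW].
have ab0 : 0 < `|a| + `|b| + 1 by rewrite ltr_wpDl // addr_ge0.
pose h := e / (2 * (`|a| + `|b| + 1)).
have h0 : 0 < h by rewrite divr_gt0 // mulr_gt0.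
have h_ab : h * (`|a| + `|b| + 1) = e / 2.
  by rewrite /h invfM -!mulrA mulVf ?gt_eqF // mulr1.
exists h => // s r /andP[s0 sh] /andP[r0 rh].
apply: xeW; rewrite /= addrA opprD addrCA subrr addr0 normrN.
rewrite (le_lt_trans (ler_normD _ _)) // !normrZ (ger0_norm s0) (ger0_norm r0).
have sa := ler_wpM2r (normr_ge0 a) sh; have rb := ler_wpM2r (normr_ge0 b) rh.
rewrite !mulrDr mulr1 in h_ab.
lra.
Qed.

Lemma mixed_derives_meet f x a b (W : set V) :
  (\forall y \near x, [/\ derivable f y a, derivable f y b,
      derivable ('D_a f) y b & derivable ('D_b f) y a]) ->
  nbhs x W ->
  exists y z, [/\ W y, W z & 'D_b ('D_a f) y = 'D_a ('D_b f) z].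
Proof.
move=> fx_der xW.
have [h h0 box] := box_nbhs a b (filterI fx_der xW).
have Dab s r : 0 <= s <= h -> 0 <= r <= h ->
    derivable f (s *: a + (r *: b + x)) a /\
    derivable ('D_a f) (s *: a + (r *: b + x)) b.
  by move=> s_h r_h; have [[fa _ fab _] _] := box s r s_h r_h; split; [exact: fa|exact: fab].
have Dba s r : 0 <= s <= h -> 0 <= r <= h ->
    derivable f (s *: b + (r *: a + x)) b /\
    derivable ('D_b f) (s *: b + (r *: a + x)) a.
  move=> s_h r_h; rewrite (addrCA (s *: b)).
  by have [[_ fb _ fba] _] := box r s r_h s_h; split; [exact: fb|exact: fba].
have [c [c' [c_h c'_h Eab]]] := second_difference_mvt h0 Dab.
have [e [e' [e_h e'_h Eba]]] := second_difference_mvt h0 Dba.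
exists (c *: a + (c' *: b + x)), (e' *: a + (e *: b + x)).
split; [exact: (box _ _ c_h c'_h).2 | exact: (box _ _ e'_h e_h).2 |].
rewrite (addrCA (e *: b)) (addrCA (h *: b)) in Eba.
have Ef : f (h *: a + (h *: b + x)) - f (h *: a + x) - (f (h *: b + x) - f x)
        = f (h *: a + (h *: b + x)) - f (h *: b + x) - (f (h *: a + x) - f x).
  rewrite !opprB [LHS]addrACA [RHS]addrACA; congr (_ + _); exact: addrC.
have /mulIf := etrans (esym Eab) (etrans Ef Eba).
by apply; rewrite expf_neq0 // gt_eqF.
Qed.

Lemma continuous_meet_eq (T : topologicalType) (D1 D2 : T -> R) (x : T) :
  {for x, continuous D1} -> {for x, continuous D2} ->
  (forall W, nbhs x W -> exists y z, [/\ W y, W z & D1 y = D2 z]) ->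
  D1 x = D2 x.
Proof.
move=> D1x D2x meet.
apply/eqP; rewrite -subr_eq0 -normr_le0; apply/ler_addgt0Pr => e e0.
have e20 : 0 < e / 2 by rewrite divr_gt0.
have [y [z [[D1y _] [_ D2z] Dyz]]] : exists y z, [/\ _, _ & D1 y = D2 z] := meet _
  (filterI ((cvgrPdist_lt _ _).1 D1x _ e20) ((cvgrPdist_lt _ _).1 D2x _ e20)).
have -> : D1 x - D2 x = (D1 x - D1 y) - (D2 x - D2 z) by rewrite Dyz; ring.
by rewrite add0r (le_trans (ler_normB _ _)) // (splitr e) lerD // ltW.
Qed.

Lemma schwarz f x a b :
  (\forall y \near x, [/\ derivable f y a, derivable f y b,
      derivable ('D_a f) y b & derivable ('D_b f) y a]) ->
  {for x, continuous ('D_b ('D_a f))} -> {for x, continuous ('D_a ('D_b f))} ->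
  'D_b ('D_a f) x = 'D_a ('D_b f) x.
Proof.
move=> fx_der D1x D2x.
exact: continuous_meet_eq D1x D2x (fun W => mixed_derives_meet fx_der).
Qed.

End Schwarz.

Section PointwiseDerive.
Context {R : realType} {V : normedModType R}.
Implicit Types (f g : V -> R) (x v : V).

Lemma is_deriveD_fun f g x v (df dg : R) :
  is_derive x v f df -> is_derive x v g dg ->
  is_derive x v (fun y => f y + g y) (df + dg).
Proof. exact: is_deriveD. Qed.

Lemma is_deriveM_fun f g x v (df dg : R) :
  is_derive x v f df -> is_derive x v g dg ->
  is_derive x v (fun y => f y * g y) (f x * dg + g x * df).
Proof. exact: is_deriveM. Qed.

Lemma is_derive_sum_fun n (h : 'I_n -> V -> R) x v (dh : 'I_n -> R) :
  (forall i, is_derive x v (h i) (dh i)) ->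
  is_derive x v (fun y => \sum_(i < n) h i y) (\sum_(i < n) dh i).
Proof. by move=> hx; have := is_derive_sum hx; rewrite fct_sumE. Qed.

End PointwiseDerive.

Lemma is_derive_entry {R : realType} {m n : nat} (x v : 'M[R]_(m, n)) i j :
  is_derive x v (fun y => y i j) (v i j).
Proof.
have did : derivable id x v by [].
apply: DeriveDef; first exact: (derivable_mxP _ _ _).1 did i j.
by have := derive_mx did; rewrite derive_id => /matrixP/(_ i j); rewrite mxE.
Qed.

Lemma derive_system_rhs {R : realType} {d : nat} (alpha : 'I_d -> 'I_d -> 'I_d -> R)
    (phi : 'cV[R]_d -> R) (t : 'cV[R]_d) (a b : 'I_d) :
  derivable phi t (basis_vec b) ->
  (forall k, derivable (partial k phi) t (basis_vec b)) ->
  'D_(basis_vec b) (fun y : 'cV[R]_d =>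
      \sum_(j < d) \sum_(k < d) alpha a j k * y j 0 * partial k phi y
      + y a 0 * phi y) t
  = \sum_(k < d) alpha a b k * partial k phi t
    + \sum_(j < d) \sum_(k < d) alpha a j k * t j 0 * partial b (partial k phi) t
    + (a == b)%:R * phi t + t a 0 * partial b phi t.
Proof.
move=> phi_b dk_b.
have e_b j : (basis_vec b : 'cV[R]_d) j 0 = (j == b)%:R by rewrite mxE eqxx andbT.
have rhs_b := is_deriveD_fun
  (is_derive_sum_fun (fun j => is_derive_sum_fun (fun k =>
     is_deriveM_fun (is_deriveM_fun (is_derive_cst (alpha a j k) t (basis_vec b))
                                    (is_derive_entry t (basis_vec b) j 0))
                    (derivableP (dk_b k)))))
  (is_deriveM_fun (is_derive_entry t (basis_vec b) a 0) (derivableP phi_b)).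
have collapse : \sum_(j < d) \sum_(k < d) partial k phi t * (alpha a j k * (j == b)%:R)
              = \sum_(k < d) alpha a b k * partial k phi t.
  rewrite (bigD1 b) //= [X in _ + X]big1 ?addr0 => [|j /negbTE jb].
    by apply: eq_bigr => k _; rewrite eqxx mulr1 mulrC.
  by apply: big1 => k _; rewrite jb !mulr0.
rewrite derive_val /cst !e_b.
under eq_bigr => j _ do under eq_bigr => k _ do rewrite e_b mulr0 addr0.
under eq_bigr => j _ do rewrite big_split /=.
rewrite big_split /= collapse /partial.
lra.
Qed.

Lemma det_continuous {K : numFieldType} (n : nat) :
  continuous (fun M : 'M[K]_n => \det M).
Proof.
apply: (@continuous_big _ _ +%R 0 xpredT) => [|s _]; first exact: add_continuous.
have prod_cont : continuous (fun M : 'M[K]_n => \prod_i M i (s i)).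
  apply: continuous_big => [|i _]; first exact: mul_continuous.
  exact: coord_continuous.
by move=> M; apply: (continuousM (cvg_cst _) (prod_cont M)).
Qed.

Lemma sym_mx_commute {R : comPzRingType} {n : nat} (M S H : 'M[R]_n) (t g : 'cV[R]_n)
    (p : R) :
  M^T = M -> S^T = S -> H^T = H ->
  (1%:M - M) *m g = p *: t -> (1%:M - M) *m H = S + t *m g^T ->
  S *m M = M *m S.
Proof.
set U := 1%:M - M => Msym Ssym Hsym Ug UH.
have Usym : U^T = U by rewrite /U linearB /= tr_scalar_mx Msym.
have HU : H *m U = S + g *m t^T.
  by rewrite -Hsym -Usym -trmx_mul UH linearD /= trmx_mul trmxK Ssym.
have gU : g^T *m U = p *: t^T by rewrite -Usym -trmx_mul Ug linearZ.
have : S *m U + p *: (t *m t^T) = U *m S + p *: (t *m t^T).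
  transitivity (U *m H *m U).
    by rewrite UH mulmxDl -mulmxA gU scalemxAr.
  by rewrite -mulmxA HU mulmxDr mulmxA Ug scalemxAl.
move/addIr; rewrite /U mulmxBr mulmxBl mulmx1 mul1mx.
by move/addrI/oppr_inj.
Qed.

Section SymmetricCoefficients.
Variables (R : realType) (d : nat) (alpha : 'I_d -> 'I_d -> 'I_d -> R).
Hypothesis alpha_sym : forall i j k : 'I_d,
  [/\ alpha i k j = alpha i j k, alpha j i k = alpha i j k,
      alpha j k i = alpha i j k, alpha k i j = alpha i j k
    & alpha k j i = alpha i j k].

Definition Asum (t : 'cV[R]_d) : 'M[R]_d := \sum_(k < d) t k 0 *: Amat alpha k.

Lemma AsumE t a b : Asum t a b = \sum_(k < d) t k 0 * alpha k a b.
Proof. by rewrite summxE; apply: eq_bigr => k _; rewrite !mxE. Qed.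

Lemma AsumZ p t : Asum (p *: t) = p *: Asum t.
Proof. by rewrite scaler_sumr; apply: eq_bigr => k _; rewrite mxE scalerA. Qed.

Lemma Asum0 : Asum 0 = 0.
Proof. by rewrite -(scale0r 0) AsumZ scale0r. Qed.

Lemma tr_Asum t : (Asum t)^T = Asum t.
Proof.
apply/matrixP => a b; rewrite mxE !AsumE; apply: eq_bigr => k _.
by have [-> _ _ _ _] := alpha_sym k a b.
Qed.

Lemma Asum_mul_matrix {n : nat} t (F : 'I_d -> 'I_n -> R) a b :
  (Asum t *m \matrix_(k, c) F k c) a b
  = \sum_(j < d) \sum_(k < d) alpha a j k * t j 0 * F k b.
Proof.
rewrite mxE; under eq_bigr do rewrite AsumE mxE big_distrl.
rewrite exchange_big; apply: eq_bigr => j _; apply: eq_bigr => k _ /=.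
by have [_ -> _ _ _] := alpha_sym a j k; rewrite (mulrC (t j 0)).
Qed.

Lemma commutator_Asum u t :
  Asum u *m Asum t - Asum t *m Asum u
  = \sum_(r < d) \sum_(q < d) (u r 0 * t q 0) *: Cmat alpha r q.
Proof.
have expand v w : Asum v *m Asum w
    = \sum_(r < d) \sum_(q < d) (v r 0 * w q 0) *: (Amat alpha r *m Amat alpha q).
  rewrite mulmx_suml; apply: eq_bigr => r _; rewrite mulmx_sumr.
  by apply: eq_bigr => q _; rewrite -scalemxAl -scalemxAr scalerA.
rewrite !expand [X in _ - X]exchange_big -sumrB; apply: eq_bigr => r _.
by rewrite -sumrB; apply: eq_bigr => q _; rewrite [t q 0 * _]mulrC -scalerBr.
Qed.

Lemma Cmat_sym i j r q : Cmat alpha i j r q = Cmat alpha r q i j.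
Proof.
rewrite !mxE; congr (_ - _); apply: eq_bigr => m _; rewrite !mxE.
  have [_ -> _ _ _] := alpha_sym r i m.
  by have [_ _ _ _ ->] := alpha_sym q m j.
have [_ _ _ -> _] := alpha_sym r m j.
have [_ _ -> _ _] := alpha_sym q i m.
by rewrite mulrC.
Qed.

Lemma dotv_Cmat i j t u :
  dotv (Cmat alpha i j *m t) u = (Asum u *m Asum t - Asum t *m Asum u) i j.
Proof.
rewrite commutator_Asum summxE /dotv; apply: eq_bigr => r _.
rewrite summxE mxE big_distrl; apply: eq_bigr => q _ /=.
by rewrite [RHS]mxE Cmat_sym mulrC [Cmat _ _ _ _ _ * _]mulrC mulrA.
Qed.

Lemma unitmx_near0 : \forall t \near (0 : 'cV[R]_d), 1%:M - Asum t \in unitmx.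
Proof.
have Asum_cont : continuous Asum.
  move=> t; apply: continuous_big => [|k _ s]; first exact: add_continuous.
  by apply: continuousZr_tmp; exact: coord_continuous.
have det_cont : {for 0, continuous (fun t => \det (1%:M - Asum t))}.
  apply: (@continuous_comp _ _ _ (fun t => 1%:M - Asum t)); last exact: det_continuous.
  exact: continuousB (cvg_cst _) (Asum_cont 0).
near=> t; rewrite unitmxE unitfE; near: t.
by apply: (cvgr_neq0 _ det_cont); rewrite Asum0 subr0 det1 oner_neq0.
Unshelve. all: by end_near. Qed.

Lemma dotv_Cmat_eq0 i j t g H p :
  p != 0 -> 1%:M - Asum t \in unitmx ->
  (1%:M - Asum t) *m g = p *: t ->
  (1%:M - Asum t) *m H = Asum g + p%:M + t *m g^T -> H^T = H ->
  dotv (Cmat alpha i j *m t) (invmx (1%:M - Asum t) *m t) = 0.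
Proof.
move=> p0 U_unit Ug UH Hsym.
have S_sym : (Asum g + p%:M)^T = Asum g + p%:M by rewrite linearD /= tr_Asum tr_scalar_mx.
have := sym_mx_commute (tr_Asum t) S_sym Hsym Ug UH.
set u := invmx _ *m t.
have -> : g = p *: u by rewrite /u scalemxAr -Ug mulKmx.
rewrite AsumZ mulmxDl mulmxDr mul_scalar_mx mul_mx_scalar -scalemxAl -scalemxAr.
move/addIr/(scalerI p0)/eqP; rewrite -subr_eq0 => /eqP comm.
by rewrite dotv_Cmat comm mxE.
Qed.

End SymmetricCoefficients.

Definition gradient {R : realType} {d : nat} (phi : 'cV[R]_d -> R) (t : 'cV[R]_d)
  : 'cV[R]_d := \col_k partial k phi t.

Definition hessian {R : realType} {d : nat} (phi : 'cV[R]_d -> R) (t : 'cV[R]_d)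
  : 'M[R]_d := \matrix_(a, b) partial b (partial a phi) t.

Section SystemSolution.
Variables (R : realType) (d : nat) (alpha : 'I_d -> 'I_d -> 'I_d -> R).
Hypothesis alpha_sym : forall i j k : 'I_d,
  [/\ alpha i k j = alpha i j k, alpha j i k = alpha i j k,
      alpha j k i = alpha i j k, alpha k i j = alpha i j k
    & alpha k j i = alpha i j k].
Variables (V : set 'cV[R]_d) (phi : 'cV[R]_d -> R).
Hypotheses (V_open : open V) (phi_C2 : C2_on V phi).
Hypothesis phi_sys : forall t, V t -> forall i : 'I_d,
  partial i phi t =
    \sum_(j < d) \sum_(k < d) alpha i j k * t j 0 * partial k phi t + t i 0 * phi t.

Lemma gradient_eq t : V t -> (1%:M - Asum alpha t) *m gradient phi t = phi t *: t.
Proof.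
move=> Vt; apply/matrixP => a z; rewrite (ord1 z) mulmxBl mul1mx.
rewrite mxE [X in _ + X]mxE Asum_mul_matrix // !mxE (phi_sys Vt).
by rewrite addrC addKr mulrC.
Qed.

Lemma hessian_eq t : V t ->
  (1%:M - Asum alpha t) *m hessian phi t
  = Asum alpha (gradient phi t) + (phi t)%:M + t *m (gradient phi t)^T.
Proof.
move=> Vt; have [_ phi_t] := phi_C2 Vt.
have Vnt : nbhs t V by exact: open_nbhs_nbhs.
apply/matrixP => a b; rewrite mulmxBl mul1mx mxE [X in _ + X]mxE Asum_mul_matrix //.
have -> : hessian phi t a b = 'D_(basis_vec b) (fun y : 'cV[R]_d =>
    \sum_(j < d) \sum_(k < d) alpha a j k * y j 0 * partial k phi y + y a 0 * phi y) t.
  by rewrite mxE; apply: near_eq_derive; near=> y; apply: phi_sys; near: y.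
rewrite derive_system_rhs; last 2 first.
- exact: (phi_t b).1.
- by move=> k; exact: ((phi_t k).2.2 b).1.
rewrite [RHS]mxE [X in _ = X + _]mxE AsumE.
have -> : (t *m (gradient phi t)^T) a b = t a 0 * partial b phi t.
  by rewrite mxE big_ord1 !mxE.
have -> : (phi t)%:M a b = (a == b)%:R * phi t by rewrite mxE mulr_natl.
have -> : \sum_(k < d) gradient phi t k 0 * alpha k a b
          = \sum_(k < d) alpha a b k * partial k phi t.
  by apply: eq_bigr => k _; rewrite mxE mulrC; have [_ _ _ -> _] := alpha_sym a b k.
lra.
Unshelve. all: by end_near. Qed.

Lemma hessian_sym t : V t -> (hessian phi t)^T = hessian phi t.
Proof.
move=> Vt; have [_ phi_t] := phi_C2 Vt.
have Vnt : nbhs t V by exact: open_nbhs_nbhs.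
apply/matrixP => a b; rewrite !mxE.
apply: schwarz; [|exact: ((phi_t b).2.2 a).2|exact: ((phi_t a).2.2 b).2].
near=> y; have Vy : V y by near: y.
have [_ phi_y] := phi_C2 Vy.
split; [exact: (phi_y b).1 | exact: (phi_y a).1 |
       exact: ((phi_y b).2.2 a).1 | exact: ((phi_y a).2.2 b).1].
Unshelve. all: by end_near. Qed.

End SystemSolution.

Theorem mainTheorem7 (R : realType) (d : nat)
  (alpha : 'I_d -> 'I_d -> 'I_d -> R)
  (Halpha : forall i j k : 'I_d,
     [/\ alpha i k j = alpha i j k, alpha j i k = alpha i j k,
         alpha j k i = alpha i j k, alpha k i j = alpha i j k
       & alpha k j i = alpha i j k])
  (V : set 'cV[R]_d) (phi : 'cV[R]_d -> R)
  (HVo : open V) (HV0 : V 0)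
  (Hphi : C2_on V phi)
  (Hsys : forall t, V t -> forall i : 'I_d,
     partial i phi t =
       \sum_(j < d) \sum_(k < d) alpha i j k * t j 0 * partial k phi t
       + t i 0 * phi t)
  (Hphi0 : phi 0 != 0) :
  forall i j : 'I_d,
    \forall t \near (0 : 'cV[R]_d),
      dotv (Cmat alpha i j *m t)
           (invmx (1%:M - \sum_(k < d) t k 0 *: Amat alpha k) *m t) = 0.
Proof.
move=> i j.
have V0 : nbhs (0 : 'cV[R]_d) V by exact: open_nbhs_nbhs.
have phi_near0 : \forall t \near (0 : 'cV[R]_d), phi t != 0.
  exact: cvgr_neq0 (Hphi 0 HV0).1 Hphi0.
near=> t.
have Vt : V t by near: t; exact: V0.
have phi_t : phi t != 0 by near: t; exact: phi_near0.
have U_unit : 1%:M - Asum alpha t \in unitmx by near: t; exact: unitmx_near0.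
exact (dotv_Cmat_eq0 Halpha i j phi_t U_unit (gradient_eq Halpha Hsys Vt)
  (hessian_eq Halpha HVo Hphi Hsys Vt) (hessian_sym HVo Hphi Vt)).
Unshelve. all: by end_near. Qed.
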